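(* Define $E:[0,\pi/2]\to\mathbb{R}$ by $E(0)=0$ and $E(\alpha)=\frac{1}{\sin\alpha}\left(\int_0^\alpha\sqrt{\cos t}\,dt\right)^2$ for $\alpha\in(0,\pi/2]$. Then $E$ is concave on $[0,\pi/2]$, with $E''(\alpha)<0$ for all $\alpha\in(0,\pi/2)$, and $E$ is strictly sub-additive: for all $\alpha,\beta>0$ with $\alpha+\beta\le\pi/2$, $$E(\alpha+\beta)<E(\alpha)+E(\beta).$$ *)

From Stdlib Require Import Reals Lra ClassicalEpsilon.
Open Scope R_scope.

Definition integrand (t : R) : R := sqrt (cos t).

(* RiemannInt does not
   depend on the integrability proof (RiemannInt_P5), so we pick the value
   given by any integrability proof; the default 0 is never used for
   a in [0, PI/2], where the integrand is continuous. *)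
Definition I (a : R) : R :=
  epsilon (inhabits 0)
    (fun l => exists pr : Riemann_integrable integrand 0 a, RiemannInt pr = l).

Definition E (a : R) : R :=
  if Rle_dec a 0 then 0 else (I a) ^ 2 / sin a.

(** Write [J a] for the integral of [sqrt (cos t)] over [[0, a]], so that
    [E = J ^ 2 / sin].  A direct computation gives
    [E'' = (sqrt (cos a) J - sin a) ((sin a ^ 2 + 2 cos a ^ 2) J - 2 sin a cos a sqrt (cos a))
           / (sin a ^ 3 sqrt (cos a))].
    Both factors of the numerator vanish at [0], and comparing derivatives shows
    that on [(0, PI/2)] the first one is negative and the second one positive, so
    [E'' < 0].  Hence [E'] is strictly decreasing and [E], which is continuous at [0]
    because [0 <= E <= tan], is strictly concave on [[0, PI/2]].  Strict concavity
    with [E 0 = 0] gives [E a > a / (a + b) * E (a + b)] and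
    [E b > b / (a + b) * E (a + b)], whose sum is strict sub-additivity. *)

From Stdlib Require Import Reals Lra ClassicalEpsilon.
From Coquelicot Require Import Coquelicot.
Open Scope R_scope.

Lemma derive_pos_lt (f df : R -> R) (a b : R) :
  a < b ->
  (forall y, a <= y <= b -> is_derive f y (df y)) ->
  (forall y, a < y < b -> 0 < df y) ->
  f a < f b.
Proof.
intros Hab Hder Hpos.
destruct (MVT_cor2 f df a b Hab) as [c [Hc Hcab]].
- intros c Hc. now apply is_derive_Reals, Hder.
- assert (0 < df c * (b - a)) by (apply Rmult_lt_0_compat; [apply Hpos|]; lra).
  lra.
Qed.

Lemma continuity_pt_squeeze (f g : R -> R) (x d : R) :
  0 < d -> (forall y, Rabs (y - x) < d -> Rabs (f y) <= Rabs (g y)) ->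
  f x = 0 -> g x = 0 -> continuity_pt g x -> continuity_pt f x.
Proof.
intros Hd Hfg Hfx Hgx Hg eps Heps.
destruct (Hg eps Heps) as [d' [Hd' Hclose]].
exists (Rmin d d'). split; [now apply Rmin_glb_lt|].
intros y [Hy Hyx]. simpl in *. unfold Rdist in *. rewrite Hfx, Rminus_0_r.
destruct (Req_dec y x) as [->|Hne]; [rewrite Hfx, Rabs_R0; lra|].
apply Rle_lt_trans with (Rabs (g y)).
- apply Hfg. apply Rlt_le_trans with (1 := Hyx), Rmin_l.
- replace (g y) with (g y - g x) by (rewrite Hgx; ring).
  apply Hclose. split; [easy|]. apply Rlt_le_trans with (1 := Hyx), Rmin_r.
Qed.

Definition strictly_concave_on (f : R -> R) (a b : R) : Prop :=
  forall x y t, a <= x -> x < y -> y <= b -> 0 < t < 1 ->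
    t * f x + (1 - t) * f y < f (t * x + (1 - t) * y).

Section ConcavityFromDerivative.

Variables (f df : R -> R) (a b : R).
Hypothesis f_cont : forall x, a <= x <= b -> continuity_pt f x.
Hypothesis f_derive : forall x, a < x < b -> is_derive f x (df x).
Hypothesis df_decr : forall x y, a < x -> x < y -> y < b -> df y < df x.

Lemma MVT_interior (x z : R) :
  a <= x -> x < z -> z <= b -> exists c, x < c < z /\ f z - f x = df c * (z - x).
Proof.
intros Hx Hxz Hz.
assert (pr : forall c, x < c < z -> derivable_pt f c).
{ intros c Hc. exists (df c). apply is_derive_Reals, f_derive. lra. }
destruct (MVT f id x z pr (fun c _ => derivable_pt_id c)) as [c [Hc Heq]].
- exact Hxz.
- intros c Hc. apply f_cont. lra.
- intros c _. apply derivable_continuous_pt, derivable_pt_id.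
- exists c. split; [exact Hc|].
  rewrite (derive_pt_eq_0 f c (df c) (pr c Hc)) in Heq
    by (apply is_derive_Reals, f_derive; lra).
  rewrite derive_pt_id in Heq. unfold id in Heq. lra.
Qed.

Lemma strictly_concave_on_derive_decr : strictly_concave_on f a b.
Proof.
intros x y t Hx Hxy Hy Ht.
set (z := t * x + (1 - t) * y).
assert (Hzx : z - x = (1 - t) * (y - x)) by (unfold z; ring).
assert (Hyz : y - z = t * (y - x)) by (unfold z; ring).
assert (0 < (1 - t) * (y - x)) by (apply Rmult_lt_0_compat; lra).
assert (0 < t * (y - x)) by (apply Rmult_lt_0_compat; lra).
destruct (MVT_interior x z) as [c1 [Hc1 Ec1]]; [lra|lra|lra|].
destruct (MVT_interior z y) as [c2 [Hc2 Ec2]]; [lra|lra|lra|].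
assert (Hdf : df c2 < df c1) by (apply df_decr; lra).
assert (0 < t * (1 - t) * (y - x) * (df c1 - df c2))
  by (repeat apply Rmult_lt_0_compat; lra).
assert (t * f x + (1 - t) * f y - f z = - (t * (1 - t) * (y - x) * (df c1 - df c2))).
{ replace (f x) with (f z - df c1 * (z - x)) by lra.
  replace (f y) with (f z + df c2 * (y - z)) by lra.
  rewrite Hzx, Hyz. ring. }
lra.
Qed.

End ConcavityFromDerivative.

Lemma concave_of_strictly_concave_on (f : R -> R) (a b : R) :
  strictly_concave_on f a b ->
  forall x y t, a <= x <= b -> a <= y <= b -> 0 <= t <= 1 ->
    t * f x + (1 - t) * f y <= f (t * x + (1 - t) * y).
Proof.
intros Hf x y t Hx Hy Ht.
destruct (Req_dec t 0) as [->|Ht0].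
{ replace (0 * x + (1 - 0) * y) with y by ring. lra. }
destruct (Req_dec t 1) as [->|Ht1].
{ replace (1 * x + (1 - 1) * y) with x by ring. lra. }
destruct (Rtotal_order x y) as [Hlt|[<-|Hgt]].
- apply Rlt_le, Hf; lra.
- replace (t * x + (1 - t) * x) with x by ring. lra.
- replace (t * x + (1 - t) * y) with ((1 - t) * y + (1 - (1 - t)) * x) by ring.
  replace (t * f x + (1 - t) * f y) with ((1 - t) * f y + (1 - (1 - t)) * f x) by ring.
  apply Rlt_le, Hf; lra.
Qed.

Lemma strictly_subadditive_of_strictly_concave_on (f : R -> R) (c : R) :
  strictly_concave_on f 0 c -> f 0 = 0 ->
  forall a b, 0 < a -> 0 < b -> a + b <= c -> f (a + b) < f a + f b.
Proof.
intros Hf Hf0 a b Ha Hb Hab.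
assert (chord : forall u v, 0 < u -> 0 < v -> u + v <= c ->
  u / (u + v) * f (u + v) < f u).
{ intros u v Hu Hv Huv.
  assert (Ht : 0 < v / (u + v) < 1).
  { split; [apply Rdiv_lt_0_compat; lra|].
    apply Rmult_lt_reg_r with (u + v); [lra|]. field_simplify; lra. }
  pose proof (Hf 0 (u + v) (v / (u + v)) (Rle_refl 0) ltac:(lra) Huv Ht) as H.
  replace (v / (u + v) * 0 + (1 - v / (u + v)) * (u + v)) with u in H by (field; lra).
  replace (1 - v / (u + v)) with (u / (u + v)) in H by (field; lra).
  rewrite Hf0 in H. lra. }
pose proof (chord a b Ha Hb Hab) as Ha'.
pose proof (chord b a Hb Ha ltac:(lra)) as Hb'.
rewrite Rplus_comm in Hb'.
replace (f (a + b)) with (a / (a + b) * f (a + b) + b / (a + b) * f (a + b))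
  by (field; lra).
lra.
Qed.

Definition J (a : R) : R := RInt integrand 0 a.

Lemma integrand_continuous (x : R) : continuous integrand x.
Proof.
apply continuous_sqrt_comp.
apply (ex_derive_continuous (K := R_AbsRing) (V := R_NormedModule) cos).
auto_derive. easy.
Qed.

Lemma ex_RInt_integrand (a b : R) : ex_RInt integrand a b.
Proof.
apply (ex_RInt_continuous (V := R_CompleteNormedModule)).
intros; apply integrand_continuous.
Qed.

Lemma I_eq_J (a : R) : I a = J a.
Proof.
unfold I.
destruct (epsilon_spec (inhabits 0)
  (fun l => exists pr : Riemann_integrable integrand 0 a, RiemannInt pr = l))
  as [pr <-].
- set (pr := ex_RInt_Reals_0 _ _ _ (ex_RInt_integrand 0 a)).
  now exists (RiemannInt pr), pr.
- symmetry; apply RInt_Reals.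
Qed.

Lemma is_derive_J (y : R) : is_derive J y (sqrt (cos y)).
Proof.
apply (is_derive_RInt integrand J 0).
- apply filter_forall. intros.
  apply (RInt_correct (V := R_CompleteNormedModule)), ex_RInt_integrand.
- apply integrand_continuous.
Qed.

Lemma Derive_J (y : R) : Derive J y = sqrt (cos y).
Proof. apply is_derive_unique, is_derive_J. Qed.

Lemma J_0 : J 0 = 0.
Proof. unfold J. rewrite RInt_point. reflexivity. Qed.

Lemma cos_sin_pos (y : R) : 0 < y < PI / 2 -> 0 < cos y /\ 0 < sin y.
Proof.
intros Hy. pose proof PI_RGT_0.
split; [apply cos_gt_0 | apply sin_gt_0]; lra.
Qed.

Lemma sqrt_cos_J_lt_sin (x : R) : 0 < x < PI / 2 -> sqrt (cos x) * J x < sin x.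
Proof.
intros Hx. destruct (cos_sin_pos x Hx) as [Hcx _].
assert (Hwx : 0 < sqrt (cos x)) by (apply sqrt_lt_R0; lra).
enough (Hlt : J x < sin x / sqrt (cos x)).
{ apply Rmult_lt_compat_l with (r := sqrt (cos x)) in Hlt; [|lra].
  replace (sqrt (cos x) * (sin x / sqrt (cos x))) with (sin x) in Hlt by (field; lra).
  lra. }
assert (H : sin 0 / sqrt (cos 0) - J 0 < sin x / sqrt (cos x) - J x).
2:{ rewrite sin_0, J_0 in H. lra. }
apply (derive_pos_lt (fun y => sin y / sqrt (cos y) - J y)
  (fun y => sin y ^ 2 / (2 * sqrt (cos y) ^ 3))); [lra| |].
- intros y Hy.
  assert (Hcy : 0 < cos y) by (apply cos_gt_0; pose proof PI_RGT_0; lra).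
  assert (Hwy : 0 < sqrt (cos y)) by (apply sqrt_lt_R0; lra).
  auto_derive.
  + repeat split; try lra. exists (sqrt (cos y)). apply is_derive_J.
  + replace (Derive (fun z => J z) y) with (sqrt (cos y)) by (symmetry; apply Derive_J).
    assert (Hw : sqrt (cos y) * sqrt (cos y) = cos y) by (apply sqrt_sqrt; lra).
    set (w := sqrt (cos y)) in *. rewrite <- Hw. field. lra.
- intros y Hy. destruct (cos_sin_pos y ltac:(lra)) as [Hcy Hsy].
  assert (Hwy : 0 < sqrt (cos y)) by (apply sqrt_lt_R0; lra).
  apply Rdiv_lt_0_compat; [nra|]. apply Rmult_lt_0_compat; [lra|]. apply pow_lt; lra.
Qed.

Lemma J_gt_chord (x : R) : 0 < x < PI / 2 ->
  2 * sin x * cos x * sqrt (cos x) < (sin x ^ 2 + 2 * cos x ^ 2) * J x.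
Proof.
intros Hx. destruct (cos_sin_pos x Hx) as [Hcx _].
assert (Hdx : 0 < sin x ^ 2 + 2 * cos x ^ 2) by nra.
set (g y := 2 * sin y * cos y * sqrt (cos y) / (sin y ^ 2 + 2 * cos y ^ 2)).
enough (Hlt : g x < J x).
{ apply Rmult_lt_compat_l with (r := sin x ^ 2 + 2 * cos x ^ 2) in Hlt; [|lra].
  unfold g in Hlt.
  replace ((sin x ^ 2 + 2 * cos x ^ 2)
    * (2 * sin x * cos x * sqrt (cos x) / (sin x ^ 2 + 2 * cos x ^ 2)))
    with (2 * sin x * cos x * sqrt (cos x)) in Hlt by (field; lra).
  lra. }
assert (H : J 0 - g 0 < J x - g x).
2:{ replace (g 0) with 0 in H by (unfold g; rewrite sin_0, cos_0; field).
    rewrite J_0 in H. lra. }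
apply (derive_pos_lt (fun y => J y - g y)
  (fun y => 4 * sqrt (cos y) * sin y ^ 2 * (sin y ^ 2 + cos y ^ 2)
            / (sin y ^ 2 + 2 * cos y ^ 2) ^ 2)); [lra| |].
- intros y Hy.
  assert (Hcy : 0 < cos y) by (apply cos_gt_0; pose proof PI_RGT_0; lra).
  assert (Hdy : 0 < sin y ^ 2 + 2 * cos y ^ 2) by nra.
  unfold g. auto_derive.
  + repeat split; try lra. exists (sqrt (cos y)). apply is_derive_J.
  + replace (Derive (fun z => J z) y) with (sqrt (cos y)) by (symmetry; apply Derive_J).
    assert (Hw : sqrt (cos y) * sqrt (cos y) = cos y) by (apply sqrt_sqrt; lra).
    assert (Hwy : 0 < sqrt (cos y)) by (apply sqrt_lt_R0; lra).
    set (w := sqrt (cos y)) in *. rewrite <- Hw in Hdy |- *.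
    field. simpl in Hdy |- *. lra.
- intros y Hy. destruct (cos_sin_pos y ltac:(lra)) as [Hcy Hsy].
  assert (Hwy : 0 < sqrt (cos y)) by (apply sqrt_lt_R0; lra).
  apply Rdiv_lt_0_compat; [|apply pow_lt; nra].
  apply Rmult_lt_0_compat; [|nra]. apply Rmult_lt_0_compat; [lra|]. nra.
Qed.

Definition dE (y : R) : R :=
  (2 * J y * sqrt (cos y) * sin y - J y ^ 2 * cos y) / sin y ^ 2.

Definition d2E (y : R) : R :=
  (sqrt (cos y) * J y - sin y)
  * ((sin y ^ 2 + 2 * cos y ^ 2) * J y - 2 * sin y * cos y * sqrt (cos y))
  / (sin y ^ 3 * sqrt (cos y)).

Lemma E_0 : E 0 = 0.
Proof. unfold E. destruct (Rle_dec 0 0); [reflexivity | lra]. Qed.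

Lemma E_pos_eq (y : R) : 0 < y -> E y = J y ^ 2 / sin y.
Proof. intros Hy. unfold E. destruct (Rle_dec y 0); [lra|]. now rewrite I_eq_J. Qed.

Lemma is_derive_E (a : R) : 0 < a < PI -> is_derive E a (dE a).
Proof.
intros Ha.
assert (Hs : 0 < sin a) by (apply sin_gt_0; lra).
apply (is_derive_ext_loc (fun y => J y ^ 2 / sin y)).
- exists (mkposreal a (proj1 Ha)). intros y Hy.
  change (Rabs (y - a) < a) in Hy. apply Rabs_lt_between' in Hy.
  symmetry; apply E_pos_eq; lra.
- auto_derive.
  + repeat split; try lra. exists (sqrt (cos a)). apply is_derive_J.
  + replace (Derive (fun z => J z) a) with (sqrt (cos a)) by (symmetry; apply Derive_J).
    unfold dE. field. lra.
Qed.

Lemma is_derive_dE (a : R) : 0 < a < PI / 2 -> is_derive dE a (d2E a).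
Proof.
intros Ha. destruct (cos_sin_pos a Ha) as [Hc Hs].
unfold dE. auto_derive.
- repeat split; try lra; try (exists (sqrt (cos a)); apply is_derive_J).
  apply Rgt_not_eq. nra.
- replace (Derive (fun z => J z) a) with (sqrt (cos a)) by (symmetry; apply Derive_J).
  assert (Hw : sqrt (cos a) * sqrt (cos a) = cos a) by (apply sqrt_sqrt; lra).
  assert (Hw0 : 0 < sqrt (cos a)) by (apply sqrt_lt_R0; lra).
  unfold d2E. set (w := sqrt (cos a)) in *. rewrite <- Hw. field. lra.
Qed.

Lemma d2E_neg (a : R) : 0 < a < PI / 2 -> d2E a < 0.
Proof.
intros Ha. destruct (cos_sin_pos a Ha) as [Hc Hs].
assert (Hw : 0 < sqrt (cos a)) by (apply sqrt_lt_R0; lra).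
pose proof (sqrt_cos_J_lt_sin a Ha). pose proof (J_gt_chord a Ha).
unfold d2E. apply Rdiv_neg_pos.
- apply Rmult_neg_pos; lra.
- apply Rmult_lt_0_compat; [apply pow_lt|]; lra.
Qed.

Lemma dE_decr (x y : R) : 0 < x -> x < y -> y < PI / 2 -> dE y < dE x.
Proof.
intros Hx Hxy Hy.
enough (- dE x < - dE y) by lra.
apply (derive_pos_lt (fun z => - dE z) (fun z => - d2E z)); [lra| |].
- intros z Hz. apply (is_derive_opp dE), is_derive_dE. lra.
- intros z Hz. pose proof (d2E_neg z ltac:(lra)). lra.
Qed.

Lemma E_le_tan (y : R) : 0 < y < PI / 2 -> 0 <= E y <= tan y.
Proof.
intros Hy. destruct (cos_sin_pos y Hy) as [Hc Hs].
assert (Hw : 0 < sqrt (cos y)) by (apply sqrt_lt_R0; lra).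
assert (Hww : sqrt (cos y) * sqrt (cos y) = cos y) by (apply sqrt_sqrt; lra).
pose proof (sqrt_cos_J_lt_sin y Hy) as Hup. pose proof (J_gt_chord y Hy) as Hlow.
assert (HJ : 0 < J y).
{ assert (0 < 2 * sin y * cos y * sqrt (cos y)) by (repeat apply Rmult_lt_0_compat; lra).
  apply Rmult_lt_reg_l with (sin y ^ 2 + 2 * cos y ^ 2); [nra | lra]. }
rewrite E_pos_eq by lra. unfold tan. split.
- apply Rlt_le, Rdiv_lt_0_compat; [apply pow_lt|]; lra.
- apply Rmult_le_reg_r with (sin y * cos y); [nra|].
  replace (J y ^ 2 / sin y * (sin y * cos y)) with ((sqrt (cos y) * J y) ^ 2)
    by (replace ((sqrt (cos y) * J y) ^ 2) with (sqrt (cos y) * sqrt (cos y) * J y ^ 2)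
          by ring; rewrite Hww; field; lra).
  replace (sin y / cos y * (sin y * cos y)) with (sin y ^ 2) by (field; lra).
  assert (0 < sqrt (cos y) * J y) by nra. nra.
Qed.

Lemma continuity_pt_E (c : R) : 0 <= c <= PI / 2 -> continuity_pt E c.
Proof.
intros Hc. pose proof PI_RGT_0.
destruct (Req_dec c 0) as [->|Hc0].
- apply (continuity_pt_squeeze E tan 0 (PI / 2)); [lra| | apply E_0 | apply tan_0 |].
  + intros y Hy. rewrite Rminus_0_r in Hy. apply Rabs_def2 in Hy.
    destruct (Rle_dec y 0) as [Hy0|Hy0].
    * unfold E. destruct (Rle_dec y 0); [|lra]. rewrite Rabs_R0. apply Rabs_pos.
    * pose proof (E_le_tan y ltac:(lra)). rewrite !Rabs_right; lra.
  + apply derivable_continuous_pt. exists 1. apply is_derive_Reals. unfold tan.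
    auto_derive; rewrite ?sin_0, cos_0; [lra | field].
- apply derivable_continuous_pt. exists (dE c). apply is_derive_Reals, is_derive_E. lra.
Qed.

Lemma E_strictly_concave : strictly_concave_on E 0 (PI / 2).
Proof.
apply strictly_concave_on_derive_decr with dE.
- apply continuity_pt_E.
- intros x Hx. apply is_derive_E. lra.
- apply dE_decr.
Qed.

Theorem proposition4p1 :
  (forall x y t : R, 0 <= x <= PI / 2 -> 0 <= y <= PI / 2 -> 0 <= t <= 1 ->
     t * E x + (1 - t) * E y <= E (t * x + (1 - t) * y)) /\
  (exists E' : R -> R,
     (forall a : R, 0 < a < PI / 2 -> derivable_pt_lim E a (E' a)) /\
     (forall a : R, 0 < a < PI / 2 ->
        exists E'' : R, derivable_pt_lim E' a E'' /\ E'' < 0)) /\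
  (forall a b : R, 0 < a -> 0 < b -> a + b <= PI / 2 ->
     E (a + b) < E a + E b).
Proof.
split; [|split].
- exact (concave_of_strictly_concave_on E 0 (PI / 2) E_strictly_concave).
- exists dE. split.
  + intros a Ha. apply is_derive_Reals, is_derive_E. lra.
  + intros a Ha. exists (d2E a).
    split; [apply is_derive_Reals, is_derive_dE, Ha | apply d2E_neg, Ha].
- exact (strictly_subadditive_of_strictly_concave_on E (PI / 2) E_strictly_concave E_0).
Qed.
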